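(* Let $K$ be a countably infinite complete multipartite graph. (i) If $K$ has at least two infinite parts, or infinitely many vertices lying in finite parts, then $K$ is not Ramsey-dense: there is a 2-coloring of the edges of $K_\mathbb{N}$ in which every monochromatic copy of $K$ has upper density $0$. (ii) If $K$ has exactly one infinite part and exactly $n\ge1$ vertices lying in finite parts, then $\frac{1}{2^{2n-1}}\le \mathrm{Rd}_2(K)\le\frac{1}{2^n}$.
   Context: $K_{\mathbb{N}}$ is the complete graph on $\mathbb{N}=\{1,2,\dots\}$; a copy of $K$ is a subgraph of $K_\mathbb{N}$ isomorphic to $K$, monochromatic if all its edges have the same color. $\overline{d}(V)=\limsup_{t\to\infty}|V\cap\{1,\dots,t\}|/t$. A graph is Ramsey-dense if in every 2-coloring of the edges of $K_\mathbb{N}$ there is a monochromatic copy of it with positive upper density. For a 2-coloring $\varphi$, $\mathrm{Rd}_\varphi(K)$ is the supremum of the upper densities of monochromatic copies of $K$, and $\mathrm{Rd}_2(K)=\inf_\varphi\mathrm{Rd}_\varphi(K)$. *)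

From HB Require Import structures.
From mathcomp Require Import all_boot all_order all_algebra.
From mathcomp Require Import all_classical all_reals all_analysis.
Set Implicit Arguments. Unset Strict Implicit. Unset Printing Implicit Defensive.
Import Order.TTheory GRing.Theory Num.Theory.
Local Open Scope classical_set_scope.
Local Open Scope ring_scope.

(* A countably infinite complete multipartite graph K is represented on the
   vertex set nat by a part labelling [p : nat -> nat]: vertices u, v are
   adjacent iff [p u <> p v]. *)
Definition part (p : nat -> nat) (i : nat) : set nat := [set v | p v = i].

Definition two_infinite_parts (p : nat -> nat) : Prop :=
  exists i j, i <> j /\ infinite_set (part p i) /\ infinite_set (part p j).

Definition exactly_one_infinite_part (p : nat -> nat) : Prop :=
  exists i, infinite_set (part p i) /\
    forall j, infinite_set (part p j) -> j = i.

Definition finite_part_vertices (p : nat -> nat) : set nat :=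
  [set v | finite_set (part p (p v))].

(* A 2-colouring of the edges of K_N (N = {1,2,...}): the edge {x,y} (x <> y)
   gets colour [c (minn x y) (maxn x y)]; every colouring arises this way. *)
Definition coloring := nat -> nat -> bool.
Definition ecol (c : coloring) (x y : nat) : bool := c (minn x y) (maxn x y).

(* A copy of K in K_N is the image of an embedding [f] of the vertices of K
   into N = {1,2,...}; its vertex set is [range f]. It is monochromatic if all
   images of edges of K get the same colour. *)
Definition copy (f : nat -> nat) : Prop :=
  injective f /\ (forall v, (0 < f v)%N).

Definition mono_copy (p : nat -> nat) (c : coloring) (f : nat -> nat) : Prop :=
  copy f /\ exists b : bool, forall u v, p u <> p v -> ecol c (f u) (f v) = b.

Definition dens_seq {R : realType} (V : set nat) (t : nat) : R :=
  (\sum_(1 <= i < t.+1) (if `[< V i >] then 1 else 0 : R)) / t%:R.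

Definition upper_density {R : realType} (V : set nat) : \bar R :=
  limn_esup (fun t => (@dens_seq R V t)%:E).

Definition Rd_phi {R : realType} (p : nat -> nat) (c : coloring) : \bar R :=
  ereal_sup [set @upper_density R (range f) | f in mono_copy p c].

Definition Rd2 {R : realType} (p : nat -> nat) : \bar R :=
  ereal_inf [set @Rd_phi R p c | c in [set: coloring]].

From HB Require Import structures.
From mathcomp Require Import all_boot all_order all_algebra.
From mathcomp Require Import all_classical all_reals all_analysis.
From mathcomp Require Import zify lra.
Import Order.TTheory GRing.Theory Num.Theory.

(* Upper bounds come from [bit_coloring], which colours the edge [{x < y}] by the
   [x]-th binary digit of [y].  If [f] is a copy of colour [b] and [X] is a finite
   set of vertices, every common neighbour [w] of [X] with [f w > max f(X)] has
   digit [b] at all positions [f(X)]; counting over periods of length [2 ^ m]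
   shows that such integers have upper density at most [2 ^ -|X|].
   - (i): for every [k] there are two [k]-sets [X], [Y] completely joined to each
     other, so every vertex is a common neighbour of [X] or of [Y]; hence a
     monochromatic copy has upper density [<= 2 * 2 ^ -k] for all [k], i.e. [0].
   - (ii), upper bound: take for [X] the [n] vertices of the finite parts; every
     other vertex lies in the infinite part and is a common neighbour of [X].
   - (ii), lower bound: in any colouring, greedily extract from [N] a chain
     [v_1, ..., v_(2n-1)] and a set [W] of density [>= 2 ^ -(2n-1)] such that all
     edges from [v_j] to later [v_l] and to [W] have one colour [c_j]; [n] of the
     [c_j] agree, and [K] embeds with its finite parts on these [n] vertices and
     its infinite part onto [W]. *)

Set Implicit Arguments.
Unset Strict Implicit.

Definition bits_eq (P : seq nat) (b : bool) (y : nat) : bool :=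
  all (fun j => odd (y %/ 2 ^ j) == b) P.

Lemma odd_div_exp2D r m j : j < m -> odd ((r + 2 ^ m) %/ 2 ^ j) = odd (r %/ 2 ^ j).
Proof.
move=> jm; rewrite divnDr; last by rewrite dvdn_exp2l // ltnW.
rewrite -(expnB (isT : 0 < 2)) ?(ltnW jm) // oddD oddX.
have -> : (m - j == 0) = false by apply/eqP; lia.
by rewrite addbF.
Qed.

Lemma odd_div_exp2_top r m :
  r < 2 ^ m -> odd (r %/ 2 ^ m) = false /\ odd ((r + 2 ^ m) %/ 2 ^ m) = true.
Proof. by move=> rm; rewrite divnDr ?dvdnn // divn_small // divnn expn_gt0. Qed.

Lemma bits_eq_shift P b r m q :
  all (fun j => j < m) P -> bits_eq P b (r + q * 2 ^ m) = bits_eq P b r.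
Proof.
move=> /allP Pm; elim: q => [|q IHq]; first by rewrite mul0n addn0.
rewrite mulSn addnCA addnC -IHq; apply: eq_in_all => j /Pm jm /=.
by rewrite odd_div_exp2D.
Qed.

Lemma uniq_size_lt P m : uniq P -> all (fun j => j < m) P -> size P <= m.
Proof.
move=> uP /allP Pm; rewrite -(size_iota 0 m); apply: uniq_leq_size => // j /Pm.
by rewrite mem_iota.
Qed.

(* Exactly [2 ^ (m - |P|)] residues [r < 2 ^ m] have the prescribed digits on [P]:
   split [0, 2 ^ (m+1)) into halves according to the digit at position [m]. *)
Lemma bits_eq_count_block P b m : uniq P -> all (fun j => j < m) P ->
  \sum_(0 <= r < 2 ^ m) bits_eq P b r = 2 ^ (m - size P).
Proof.
elim: m P => [|m IHm] P uP Pm.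
  by case: P uP Pm => [|j P] //= _ _; rewrite big_nat1.
rewrite expnS mul2n -addnn (@big_cat_nat _ _ _ (2 ^ m)) ?leq_addr //=.
rewrite -{2}(add0n (2 ^ m)) big_addn addnK.
have [mP|mP] := boolP (m \in P); last first.
  have Pm' : all (fun j => j < m) P.
    apply/allP => j jP; have := allP Pm j jP.
    have : j != m by apply: contraNneq mP => <-.
    by move/eqP; lia.
  under [X in _ + X]eq_big_nat => r _ do rewrite -[2 ^ m]mul1n bits_eq_shift //.
  by rewrite IHm // addnn -mul2n -expnS subSn // uniq_size_lt.
have uP' : uniq (rem m P) by exact: rem_uniq.
have Pm' : all (fun j => j < m) (rem m P).
  apply/allP => j; rewrite mem_rem_uniq // inE => /andP[jm jP].
  by have := allP Pm j jP; move: jm => /eqP; lia.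
have digit_m y : bits_eq P b y = (odd (y %/ 2 ^ m) == b) && bits_eq (rem m P) b y.
  by rewrite /bits_eq (perm_all _ (perm_to_rem mP)).
have low : \sum_(0 <= r < 2 ^ m) bits_eq P b r =
           \sum_(0 <= r < 2 ^ m) (~~ b && bits_eq (rem m P) b r).
  apply: eq_big_nat => r /andP[_ rm].
  by rewrite digit_m (odd_div_exp2_top rm).1; case: (b).
have high : \sum_(0 <= r < 2 ^ m) bits_eq P b (r + 2 ^ m) =
            \sum_(0 <= r < 2 ^ m) (b && bits_eq (rem m P) b r).
  apply: eq_big_nat => r /andP[_ rm].
  rewrite digit_m -[2 ^ m]mul1n bits_eq_shift // mul1n.
  by rewrite (odd_div_exp2_top rm).2; case: (b).
have -> : m.+1 - size P = m - size (rem m P).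
  by rewrite size_rem //; case: (P) mP => //= *; lia.
rewrite low high -(IHm _ uP' Pm'); case: (b) => /=.
  by rewrite big1 ?add0n.
by rewrite [X in _ + X]big1 ?addn0.
Qed.

(* Counting on [1, t]: [|{y <= t | bits_eq P b y}| * 2 ^ |P| <= t + 1 + 2 ^ m],
   by covering [1, t] with [t %/ 2 ^ m + 1] full periods. *)
Lemma bits_eq_count P b m t : uniq P -> all (fun j => j < m) P ->
  (\sum_(1 <= y < t.+1) bits_eq P b y) * 2 ^ size P <= t + 1 + 2 ^ m.
Proof.
move=> uP Pm; have m0 : 0 < 2 ^ m by rewrite expn_gt0.
set q := t.+1 %/ 2 ^ m.
have periods k : \sum_(0 <= r < k * 2 ^ m) bits_eq P b r = k * 2 ^ (m - size P).
  elim: k => [|k IHk]; first by rewrite !mul0n big_geq.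
  rewrite mulSn addnC (@big_cat_nat _ _ _ (k * 2 ^ m)) ?leq_addr //= IHk.
  rewrite -{1}(add0n (k * 2 ^ m)) big_addn addKn.
  rewrite (eq_big_nat _ _ (fun r _ => congr1 nat_of_bool (bits_eq_shift b r k Pm))).
  by rewrite bits_eq_count_block // mulSn addnC.
have cover : \sum_(1 <= y < t.+1) bits_eq P b y <=
             \sum_(0 <= r < q.+1 * 2 ^ m) bits_eq P b r.
  have tq : t.+1 <= q.+1 * 2 ^ m by exact: ltnW (ltn_ceil _ m0).
  rewrite (@big_cat_nat _ _ _ t.+1 0 (q.+1 * 2 ^ m)) //=.
  by rewrite (@big_cat_nat _ _ _ 1 0 t.+1) //= addnAC leq_addl.
rewrite periods in cover; apply: leq_trans (leq_mul cover (leqnn _)) _.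
rewrite -mulnA -expnD subnK ?uniq_size_lt // mulSn addnC.
by have := leq_trunc_div t.+1 (2 ^ m); rewrite -/q; lia.
Qed.

Local Open Scope classical_set_scope.
Local Open Scope ring_scope.

Definition count_upto (V : set nat) (t : nat) : nat :=
  (\sum_(1 <= i < t.+1) `[< V i >])%N.

Lemma count_upto_le_t V t : (count_upto V t <= t)%N.
Proof.
rewrite /count_upto; apply: leq_trans (_ : \sum_(1 <= i < t.+1) 1 <= t)%N.
  by apply: leq_sum => i _; case: asboolP.
by rewrite big_const_nat iter_addn_0 mul1n subn1.
Qed.

Lemma count_upto_subU V A B t :
  V `<=` A `|` B -> (count_upto V t <= count_upto A t + count_upto B t)%N.
Proof.
move=> VAB; rewrite /count_upto -big_split /=; apply: leq_sum => i _.
by case: asboolP => // /VAB [] Vi; rewrite (asboolT Vi) // addn1.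
Qed.

Lemma count_upto_bounded V M t : V `<=` [set y | (y <= M)%N] -> (count_upto V t <= M)%N.
Proof.
move=> VM; rewrite /count_upto.
have le_min : (\sum_(1 <= i < t.+1) (i <= M) <= minn t M)%N.
  elim: t => [|t IHt]; first by rewrite big_geq.
  by rewrite big_nat_recr //=; case: leqP; lia.
apply: leq_trans (leq_trans le_min (geq_minr _ _)).
by apply: leq_sum => i _; case: asboolP => // /VM ->.
Qed.

Section UpperDensity.
Variable R : realType.
Implicit Types (V W A B : set nat).

Lemma dens_seqE V t : @dens_seq R V t = (count_upto V t)%:R / t%:R.
Proof.
rewrite /dens_seq /count_upto natr_sum; congr (_ / _); apply: eq_bigr => i _.
by case: asboolP.
Qed.

Lemma dens_seq_ge0 V t : 0 <= @dens_seq R V t.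
Proof. by rewrite dens_seqE divr_ge0. Qed.

Lemma dens_seq_le1 V t : @dens_seq R V t <= 1.
Proof.
rewrite dens_seqE; have [->|t0] := eqVneq t 0%N; first by rewrite invr0 mulr0.
by rewrite ler_pdivrMr ?mul1r ?ler_nat ?count_upto_le_t // ltr0n lt0n.
Qed.

Lemma upper_densityE V :
  @upper_density R V = ereal_inf (range (esups (fun t => (@dens_seq R V t)%:E))).
Proof.
by rewrite /upper_density limn_esup_lim; apply: cvg_lim => //; exact: cvg_esups_inf.
Qed.

Lemma upper_density_le V (x : \bar R) :
  (exists N, forall t, (N <= t)%N -> ((dens_seq V t)%:E <= x)%E) ->
  (upper_density V <= x)%E.
Proof.
move=> [N Nx]; rewrite upper_densityE; apply: le_trans (ereal_inf_lbound _) _.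
  by exists N.
by apply: ub_ereal_sup => _ [t /= Nt <-]; apply: Nx.
Qed.

Lemma upper_density_lt V (x : \bar R) : (upper_density V < x)%E ->
  exists N, forall t, (N <= t)%N -> ((dens_seq V t)%:E < x)%E.
Proof.
rewrite upper_densityE => /ereal_inf_lt [_ [N _ <-] Nx]; exists N => t Nt.
by apply: le_lt_trans Nx; apply: ereal_sup_ubound; exists t.
Qed.

Lemma upper_density_ge V (x : \bar R) :
  (forall N, exists2 t, (N <= t)%N & (x <= (dens_seq V t)%:E)%E) ->
  (x <= upper_density V)%E.
Proof.
move=> Vx; rewrite upper_densityE; apply: le_ereal_inf_tmp => _ [N _ <-].
have [t Nt xt] := Vx N; apply: le_trans xt _; apply: ereal_sup_ubound; by exists t.
Qed.

Lemma upper_density_fin_num V : @upper_density R V \is a fin_num.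
Proof.
rewrite fin_numElt; apply/andP; split.
  apply: lt_le_trans (ltNyr 0) _; apply: upper_density_ge => N; exists N => //.
  by rewrite lee_fin dens_seq_ge0.
apply: le_lt_trans (ltry 1); apply: upper_density_le; exists 0%N => t _.
by rewrite lee_fin dens_seq_le1.
Qed.

Definition ud V : R := fine (@upper_density R V).

Lemma udE V : @upper_density R V = (ud V)%:E.
Proof. by rewrite /ud fineK // upper_density_fin_num. Qed.

Lemma ud_ge0 V : 0 <= ud V.
Proof.
rewrite -lee_fin -udE; apply: upper_density_ge => N; exists N => //.
by rewrite lee_fin dens_seq_ge0.
Qed.

Lemma ud_le_slope V (a C : R) : (forall t, (count_upto V t)%:R <= a * t%:R + C) ->
  ud V <= a.
Proof.
move=> Vt; rewrite -lee_fin -udE; apply/lee_addgt0Pr => e e0.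
apply: upper_density_le; exists (Num.truncn `|C / e|).+1 => t Nt.
rewrite lee_fin dens_seqE.
have t0 : 0 < t%:R :> R by rewrite ltr0n (leq_trans _ Nt).
have Ct : C / e < t%:R.
  apply: le_lt_trans (ler_norm _) _.
  apply: lt_le_trans (_ : (Num.truncn `|C / e|).+1%:R <= _).
    by case/andP: (truncn_itv (normr_ge0 (C / e))).
  by rewrite ler_nat.
rewrite ler_pdivrMr //; apply: le_trans (Vt t) _; rewrite mulrDl lerD2l.
by move: Ct; rewrite ltr_pdivrMr // => /ltW; rewrite mulrC.
Qed.

Lemma ud_subU V A B : V `<=` A `|` B -> ud V <= ud A + ud B.
Proof.
move=> VAB; apply/ler_addgt0Pr => e e0.
have below Z : exists N, forall t, (N <= t)%N ->
    ((@dens_seq R Z t)%:E < (ud Z + e / 2)%:E)%E.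
  by apply: upper_density_lt; rewrite udE lte_fin ltrDl divr_gt0.
have [NA NAe] := below A; have [NB NBe] := below B.
rewrite -lee_fin -udE; apply: upper_density_le; exists (maxn NA NB) => t.
rewrite geq_max => /andP[/NAe + /NBe]; rewrite !lte_fin => At Bt.
have VABt : @dens_seq R V t <= dens_seq A t + dens_seq B t.
  by rewrite !dens_seqE -mulrDl ler_wpM2r // -natrD ler_nat count_upto_subU.
rewrite lee_fin; lra.
Qed.

Lemma ud_bounded V M : V `<=` [set y | (y <= M)%N] -> ud V = 0.
Proof.
move=> VM; apply/eqP; rewrite eq_le ud_ge0 andbT; apply: (@ud_le_slope _ 0 M%:R) => t.
by rewrite mul0r add0r ler_nat count_upto_bounded.
Qed.

Lemma ud_le_mod_bounded V W M : V `<=` [set y | (y <= M)%N] `|` W -> ud V <= ud W.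
Proof. by move/ud_subU; rewrite (@ud_bounded [set y | (y <= M)%N] M) // add0r. Qed.

Lemma ud_sub V W : V `<=` W -> ud V <= ud W.
Proof. by move=> VW; apply: (@ud_le_mod_bounded _ _ 0) => y /VW; right. Qed.

Lemma ud_pos_infinite V : 0 < ud V -> infinite_set V.
Proof.
move=> Vpos /finite_seqP [s Vs]; move: Vpos.
rewrite (@ud_bounded _ (\max_(x <- s) x)) ?ltxx // => x; rewrite Vs /= => xs.
exact: leq_bigmax_seq.
Qed.

Lemma ud_positives : 1 <= ud [set i | (0 < i)%N].
Proof.
rewrite -lee_fin -udE; apply: upper_density_ge => N; exists N.+1 => //.
rewrite dens_seqE.
have -> : count_upto [set i | (0 < i)%N] N.+1 = N.+1.
  rewrite /count_upto (@eq_big_nat _ _ _ _ _ _ (fun _ => 1%N)).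
    by rewrite big_const_nat iter_addn_0 mul1n subn1.
  by move=> i /andP[i0 _]; rewrite asboolT.
by rewrite divff // pnatr_eq0.
Qed.

Lemma ud_bits_eq P b : uniq P -> ud (bits_eq P b) <= 1 / 2 ^+ size P.
Proof.
move=> uP; set m := (\max_(j <- P) j).+1.
have Pm : all (fun j => j < m)%N P by apply/allP => j jP; rewrite ltnS leq_bigmax_seq.
apply: (@ud_le_slope _ _ (1 + 2 ^+ m)) => t.
have := bits_eq_count b t uP Pm.
have -> : (\sum_(1 <= y < t.+1) bits_eq P b y = count_upto (bits_eq P b) t)%N.
  by apply: eq_bigr => y _; rewrite asboolb.
rewrite -(ler_nat R) natrM !natrD !natrX => count_le.
have P0 : 0 < 2 ^+ size P :> R by rewrite exprn_gt0.
rewrite -ler_pdivlMr // in count_le; apply: le_trans count_le _.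
rewrite mul1r -addrA mulrDl (mulrC _^-1) lerD2l ler_pdivrMr //.
by rewrite ler_peMr ?addr_ge0 ?exprn_ge0 // exprn_ege1 // ler1n.
Qed.

End UpperDensity.

Definition bit_coloring : coloring := fun x y => odd (y %/ 2 ^ x).

Lemma bit_coloring_digits (p f : nat -> nat) b X w :
  (forall u v, p u <> p v -> ecol bit_coloring (f u) (f v) = b) ->
  (forall x, x \in X -> p x <> p w) ->
  (f w <= \max_(x <- X) f x)%N \/ bits_eq (map f X) b (f w).
Proof.
move=> fb Xw; have [le_max|gt_max] := leqP (f w) (\max_(x <- X) f x); first by left.
right; rewrite /bits_eq all_map; apply/allP => x xX /=.
have /ltnW fxw : (f x < f w)%N by apply: leq_ltn_trans gt_max; exact: leq_bigmax_seq.
have := fb x w (Xw x xX).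
by rewrite /ecol /bit_coloring (minn_idPl fxw) (maxn_idPr fxw) => ->.
Qed.

Lemma ud_bit_coloring_copy (R : realType) (p f : nat -> nat) b X :
  injective f -> uniq X ->
  (forall u v, p u <> p v -> ecol bit_coloring (f u) (f v) = b) ->
  ud R (f @` [set w | w \in X \/ forall x, x \in X -> p x <> p w])
    <= 1 / 2 ^+ size X.
Proof.
move=> finj uX fb; set M := (\max_(x <- X) f x)%N.
have uXf : uniq (map f X) by rewrite map_inj_uniq.
rewrite -(size_map f); apply: le_trans (ud_bits_eq R b uXf).
apply: (@ud_le_mod_bounded _ _ _ M) => _ [w /= [wX|Xw] <-].
  by left; apply: leq_bigmax_seq.
by have [] := bit_coloring_digits fb Xw; [left|right].
Qed.

Lemma infinite_set_seq (T : eqType) (A : set T) k : infinite_set A ->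
  exists X : seq T, [/\ uniq X, size X = k & forall x, x \in X -> A x].
Proof.
move=> Ainf; elim: k => [|k [X [uX sX XA]]]; first by exists [::].
have [x [Ax xX]] : exists x, A x /\ x \notin X.
  apply: contrapT => noX; apply: Ainf; apply: (@sub_finite_set _ _ [set` X]) => // x Ax.
  by apply: contrapT => xX; apply: noX; exists x; split => //; apply/negP.
exists (x :: X); split => /=; [by rewrite xX uX | by rewrite sX |].
by move=> y; rewrite inE => /orP[/eqP ->|/XA].
Qed.

Lemma finite_parts_union (p : nat -> nat) (Vs : seq nat) :
  (forall u, u \in Vs -> finite_set (part p (p u))) ->
  finite_set [set v | p v \in map p Vs].
Proof.
elim: Vs => [|u Vs IHVs] Vsfin /=.
  by rewrite (_ : [set v | _] = set0) //; apply/seteqP; split.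
have -> : [set v | p v \in p u :: map p Vs] = part p (p u) `|` [set v | p v \in map p Vs].
  apply/seteqP; split => v /=; rewrite inE; first by case/orP => [/eqP|]; [left|right].
  by case=> ->; rewrite ?eqxx ?orbT.
rewrite finite_setU; split; first by apply: Vsfin; rewrite inE eqxx.
by apply: IHVs => v vVs; apply: Vsfin; rewrite inE vVs orbT.
Qed.

Lemma finite_part_vertices_seq (p : nat -> nat) k :
  infinite_set (finite_part_vertices p) ->
  exists Vs : seq nat, [/\ uniq (map p Vs), size Vs = k &
    forall u, u \in Vs -> finite_part_vertices p u].
Proof.
move=> Finf; elim: k => [|k [Vs [uVs sVs VsF]]]; first by exists [::].
have [v [Fv vVs]] : exists v, finite_part_vertices p v /\ p v \notin map p Vs.
  apply: contrapT => noV; apply: Finf.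
  apply: sub_finite_set (finite_parts_union VsF) => v Fv /=.
  by apply: contrapT => vVs; apply: noV; exists v; split => //; apply/negP.
exists (v :: Vs); split => /=; [by rewrite vVs uVs | by rewrite sVs |].
by move=> u; rewrite inE => /orP[/eqP ->|/VsF].
Qed.

Lemma separated_seqs (p : nat -> nat) :
  two_infinite_parts p \/ infinite_set (finite_part_vertices p) -> forall k,
  exists X Y : seq nat, [/\ uniq X, uniq Y, size X = k, size Y = k &
    forall x y, x \in X -> y \in Y -> p x <> p y].
Proof.
move=> [[i [j [ij [Iinf Jinf]]]]|Finf] k.
  have [X [uX sX XI]] := infinite_set_seq k Iinf.
  have [Y [uY sY YJ]] := infinite_set_seq k Jinf.
  by exists X, Y; split => // x y /XI + /YJ; rewrite /part /= => -> ->.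
have [Vs [uVs sVs _]] := finite_part_vertices_seq (k + k) Finf.
exists (take k Vs), (drop k Vs).
have := uVs; rewrite -{1}(cat_take_drop k Vs) map_cat cat_uniq => /and3P[uX XY uY].
split; [exact: map_uniq uX | exact: map_uniq uY | | |].
- by rewrite size_take sVs; case: ltnP => //; lia.
- by rewrite size_drop sVs addnK.
move=> x y xX yY pxy; move/hasP: XY; apply; exists (p y); first exact: map_f.
by rewrite -pxy; exact: map_f.
Qed.

Lemma le_halvings_le0 (R : realType) (x : R) : (forall k, x <= 2 / 2 ^+ k) -> x <= 0.
Proof.
move=> xk; apply/ler_addgt0Pr => e e0; rewrite add0r.
set k := Num.truncn (2 / e); apply: le_trans (xk k) _.
have ek : 2 / e < k.+1%:R by case/andP: (truncn_itv (ltW (divr_gt0 (ltr0Sn _ 1) e0))).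
have k2 : k.+1%:R <= 2 ^+ k :> R by rewrite -natrX ler_nat ltn_expl.
have k0 : 0 < 2 ^+ k :> R by rewrite exprn_gt0.
rewrite ler_pdivrMr // mulrC -ler_pdivrMr //.
exact: le_trans (ltW ek) k2.
Qed.

Lemma bit_coloring_density0 (R : realType) (p : nat -> nat) :
  two_infinite_parts p \/ infinite_set (finite_part_vertices p) ->
  forall f, mono_copy p bit_coloring f -> @upper_density R (range f) = 0%E.
Proof.
move=> Kp f [[finj _] [b fb]]; rewrite udE; congr (_%:E).
apply/eqP; rewrite eq_le ud_ge0 andbT; apply: le_halvings_le0 => k.
have [X [Y [uX uY sX sY XY]]] := separated_seqs Kp k.
pose nbhd (Z : seq nat) := [set w | w \in Z \/ forall x, x \in Z -> p x <> p w].
have cover : range f `<=` f @` nbhd X `|` f @` nbhd Y.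
  move=> _ [w _ <-]; have [Xw|] := pselect (forall x, x \in X -> p x <> p w).
    by left; exists w => //; right.
  move=> /existsNP [x /not_implyP [xX /contrapT pxw]].
  right; exists w => //; right => y yY pyw.
  by apply: (XY x y xX yY); rewrite pxw pyw.
apply: le_trans (ud_subU R cover) _.
have -> : 2 / 2 ^+ k = 1 / 2 ^+ k + 1 / 2 ^+ k :> R by rewrite -mulrDl.
rewrite -{1}sX -sY; exact: lerD (ud_bit_coloring_copy R finj uX fb)
                               (ud_bit_coloring_copy R finj uY fb).
Qed.

Lemma finite_part_verticesP (p : nat -> nat) i : infinite_set (part p i) ->
  (forall j, infinite_set (part p j) -> j = i) ->
  forall v, finite_part_vertices p v <-> p v <> i.
Proof.
move=> Iinf Iuniq v; split => [Fv pv|pv]; first by apply: Iinf; rewrite -pv.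
by apply: contrapT => /Iuniq.
Qed.

Lemma card_eq_enum (T : pointedType) (A : set T) n : (A #= `I_n)%card ->
  exists X : seq T, [/\ uniq X, size X = n & forall v, A v <-> v \in X].
Proof.
move=> An; have [h [hA hinj hsurj]] : exists h, set_bij `I_n A h.
  by apply/card_set_bijP; rewrite card_eq_sym.
exists (map h (iota 0 n)); split; last 2 first.
- by rewrite size_map size_iota.
- move=> v; split => [/hsurj [k kn <-]|/mapP [k kn ->]]; last first.
    by apply: hA; move: kn; rewrite mem_iota.
  by apply: map_f; rewrite mem_iota.
rewrite map_inj_in_uniq ?iota_uniq // => k l kn ln; apply: hinj; rewrite in_setE /=.
  by move: kn; rewrite mem_iota.
by move: ln; rewrite mem_iota.
Qed.

Lemma Rd2_le (R : realType) (p : nat -> nat) n : exactly_one_infinite_part p ->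
  (finite_part_vertices p #= `I_n)%card -> (@Rd2 R p <= (1 / 2 ^+ n)%:E)%E.
Proof.
move=> [i [Iinf Iuniq]] /card_eq_enum [X [uX sX FX]].
apply: le_trans (_ : Rd_phi p bit_coloring <= _)%E.
  by apply: ereal_inf_lbound; exists bit_coloring.
apply: ub_ereal_sup => _ [f [[finj _] [b fb]] <-].
rewrite udE lee_fin -sX; apply: le_trans (ud_bit_coloring_copy R finj uX fb).
apply: ud_sub => _ [w _ <-]; exists w => //.
have [pw|pw] := eqVneq (p w) i; last first.
  by left; apply/FX/(finite_part_verticesP Iinf Iuniq); apply/eqP.
right => x /FX /(finite_part_verticesP Iinf Iuniq); by rewrite pw.
Qed.

Lemma ecolC (c : coloring) x y : ecol c x y = ecol c y x.
Proof. by rewrite /ecol minnC maxnC. Qed.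

Fixpoint greedy_chain (c : coloring) (L : seq (nat * bool)) (W : set nat) : Prop :=
  if L is (v, col) :: L' then
    [/\ ~ W v, v \notin map fst L', (forall u, u \in map fst L' -> ecol c v u = col),
        (forall w, W w -> ecol c v w = col) & greedy_chain c L' W]
  else True.

Lemma greedy_chain_filter c L W (P : pred (nat * bool)) :
  greedy_chain c L W -> greedy_chain c (seq.filter P L) W.
Proof.
elim: L => [|[v col] L IHL] //= [vW vL vLcol vWcol chainL].
have sub u : u \in map fst (seq.filter P L) -> u \in map fst L.
  by case/mapP => x; rewrite mem_filter => /andP[_ xL] ->; exact: map_f.
case: (P (v, col)) => /=; last exact: IHL.
split => //; last exact: IHL.
  by apply: contra vL; exact: sub.
by move=> u /sub /vLcol.
Qed.

Lemma greedy_chain_mono c L W b :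
  greedy_chain c L W -> all (fun x => x.2 == b) L ->
  [/\ uniq (map fst L),
      (forall x y, x \in map fst L -> y \in map fst L -> x <> y -> ecol c x y = b),
      (forall x w, x \in map fst L -> W w -> ecol c x w = b) &
      (forall x, x \in map fst L -> ~ W x)].
Proof.
elim: L => [|[v col] L IHL] //= [vW vL vLcol vWcol chainL] /andP[/eqP colb Lb].
have [uL LL LW Lout] := IHL chainL Lb; rewrite colb in vLcol vWcol.
split; first by rewrite vL.
- move=> x y; rewrite !inE => /orP[/eqP ->|xL] /orP[/eqP ->|yL] xy.
  + by case: xy.
  + exact: vLcol.
  + by rewrite ecolC; exact: vLcol.
  + exact: LL.
- by move=> x w; rewrite inE => /orP[/eqP ->|xL]; [exact: vWcol | exact: LW].
- by move=> x; rewrite inE => /orP[/eqP ->|/Lout].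
Qed.

(* At each step the least element [v] of the current set is
   chosen and the denser of its two colour classes is kept. *)
Lemma greedy_chain_exists (R : realType) (c : coloring) k (A : set nat) (a : R) :
  0 < a -> a <= ud R A ->
  exists L W, [/\ size L = k, W `<=` A, a / 2 ^+ k <= ud R W,
                  (forall u, u \in map fst L -> A u) & greedy_chain c L W].
Proof.
elim: k A a => [|k IHk] A a a0 aA.
  by exists [::], A; split => //; rewrite expr0 divr1.
have [v Av] : A !=set0.
  by apply: infinite_setN0; apply: ud_pos_infinite; apply: lt_le_trans aA.
pose A_ col := [set w | A w /\ w <> v /\ ecol c v w = col].
have split_A : A `<=` [set y | (y <= v)%N] `|` (A_ true `|` A_ false).
  move=> w Aw; have [wv|vw] := leqP w v; first by left.
  have wv : w <> v by move=> wv; rewrite wv ltnn in vw.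
  by right; case E: (ecol c v w); [left|right].
have aA_ : a <= ud R (A_ true) + ud R (A_ false).
  by apply: le_trans aA (le_trans (ud_le_mod_bounded R split_A) (ud_subU R _)).
have [col colA] : exists col, a / 2 <= ud R (A_ col).
  have [|h] := lerP (a / 2) (ud R (A_ true)); first by exists true.
  by exists false; lra.
have [L [W [sL WA aW LA chainL]]] := IHk _ _ (divr_gt0 a0 (ltr0Sn _ 1)) colA.
exists ((v, col) :: L), W; split => /=.
- by rewrite sL.
- by move=> w /WA [].
- by apply: le_trans aW; rewrite exprS invfM mulrA.
- by move=> u; rewrite inE => /orP[/eqP ->|/LA []].
split => //; [by move=> /WA [_ []] | by apply/negP => /LA [_ []] |
              by move=> u /LA [_ []] | by move=> w /WA [_ []]].
Qed.

Lemma majority_colour (T : Type) (col : T -> bool) (s : seq T) n :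
  size s = (2 * n - 1)%N -> exists b, (n <= count (fun x => col x == b) s)%N.
Proof.
move=> ss; have [le_n|lt_n] := leqP n (count col s).
  by exists true; rewrite (@eq_count _ _ col) // => x; rewrite eqb_id.
exists false; rewrite (@eq_count _ _ (predC col)); last by move=> x; rewrite eqbF_neg.
by have := count_predC col s; rewrite ss; lia.
Qed.

(* Embedding [K] along a monochromatic chain: the infinite part [i] is sent
   bijectively onto [W] and the other vertices, all listed in [X], injectively
   into the chain vertices [xs]. *)
Lemma mono_copy_of_chain (p : nat -> nat) (c : coloring) i (X xs : seq nat)
    (W : set nat) b :
  infinite_set (part p i) -> infinite_set W ->
  (forall v, p v <> i -> v \in X) -> (size X <= size xs)%N -> uniq xs ->
  (forall x, x \in xs -> ~ W x) ->
  (forall x y, x \in xs -> y \in xs -> x <> y -> ecol c x y = b) ->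
  (forall x w, x \in xs -> W w -> ecol c x w = b) ->
  (forall x, x \in xs -> (0 < x)%N) -> W `<=` [set w | (0 < w)%N] ->
  exists f, mono_copy p c f /\ W `<=` range f.
Proof.
move=> Iinf Winf XI Xxs uxs xsW xsb xsWb xs0 W0.
have [h [hW hinj hsurj]] : exists h, set_bij (part p i) W h.
  apply/card_set_bijP; apply: (card_eq_trans (eq_card_nat (countableP _) Iinf)).
  by rewrite card_eq_sym; exact: eq_card_nat (countableP _) Winf.
pose f v := if p v == i then h v else nth 0%N xs (index v X).
have index_lt v : p v <> i -> (index v X < size xs)%N.
  by move=> pv; apply: leq_trans Xxs; rewrite index_mem XI.
have f_xs v : p v <> i -> f v \in xs.
  by move=> pv; rewrite /f (introF eqP pv) mem_nth // index_lt.
have f_W v : p v = i -> W (f v) by move=> pv; rewrite /f pv eqxx; apply: hW.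
have finj : injective f.
  move=> u v; have [pu|/eqP pu] := eqVneq (p u) i; have [pv|/eqP pv] := eqVneq (p v) i.
  - by rewrite /f pu pv eqxx => /hinj; apply; rewrite in_setE.
  - by move=> fuv; case: (xsW _ (f_xs v pv)); rewrite -fuv; apply: f_W.
  - by move=> fuv; case: (xsW _ (f_xs u pu)); rewrite fuv; apply: f_W.
  rewrite /f (introF eqP pu) (introF eqP pv) => /eqP.
  rewrite nth_uniq ?index_lt // => /eqP iuv.
  by rewrite -(nth_index 0%N (XI u pu)) iuv nth_index ?XI.
exists f; split; last first.
  by move=> w /hsurj [v pv <-]; exists v => //; rewrite /f pv eqxx.
split.
  split => // v; have [pv|/eqP pv] := eqVneq (p v) i.
    exact/W0/f_W.
  exact/xs0/f_xs.
exists b => u v puv.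
have [pu|/eqP pu] := eqVneq (p u) i; have [pv|/eqP pv] := eqVneq (p v) i.
- by case: puv; rewrite pu pv.
- by rewrite ecolC; apply: xsWb (f_xs v pv) (f_W u pu).
- exact: xsWb (f_xs u pu) (f_W v pv).
apply: xsb (f_xs u pu) (f_xs v pv) _ => fuv.
by apply: puv; rewrite (finj _ _ fuv).
Qed.

Lemma Rd2_ge (R : realType) (p : nat -> nat) n : exactly_one_infinite_part p ->
  (finite_part_vertices p #= `I_n)%card -> ((1 / 2 ^+ (2 * n - 1))%:E <= @Rd2 R p)%E.
Proof.
move=> [i [Iinf Iuniq]] /card_eq_enum [X [_ sX FX]].
apply: le_ereal_inf_tmp => _ [c _ <-].
have [L [W [sL Wpos dW Lpos chainL]]] :=
  greedy_chain_exists c (2 * n - 1) ltr01 (ud_positives R).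
have [b nb] := majority_colour snd sL.
set xs := map fst (seq.filter (fun x => x.2 == b) L).
have [uxs xsb xsWb xsW] := greedy_chain_mono (greedy_chain_filter _ chainL)
                                            (filter_all (fun x => x.2 == b) L).
have Winf : infinite_set W.
  by apply: ud_pos_infinite; apply: lt_le_trans dW; rewrite mul1r invr_gt0 exprn_gt0.
have xs0 x : x \in xs -> (0 < x)%N.
  by case/mapP => y; rewrite mem_filter => /andP[_ yL] ->; apply: Lpos; exact: map_f.
have XI v : p v <> i -> v \in X by move/(finite_part_verticesP Iinf Iuniq)/FX.
have Xxs : (size X <= size xs)%N by rewrite sX size_map size_filter.
have [f [fmono Wf]] :=
  mono_copy_of_chain Iinf Winf XI Xxs uxs xsW xsb xsWb xs0 Wpos.
apply: le_trans (ereal_sup_ubound _) => /=; last by exists f.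
by rewrite udE lee_fin (le_trans dW) // ud_sub.
Qed.

(* The theorem; the lower bound of (ii) holds even for [n = 0]. *)
Theorem mainTheorem8 (R : realType) (p : nat -> nat) :
  ((two_infinite_parts p \/ infinite_set (finite_part_vertices p)) ->
     exists c : coloring, forall f, mono_copy p c f ->
       @upper_density R (range f) = 0%E) /\
  (forall n : nat, (1 <= n)%N ->
     exactly_one_infinite_part p ->
     (finite_part_vertices p #= `I_n)%card ->
     ((1 / 2 ^+ (2 * n - 1))%:E <= @Rd2 R p /\
      @Rd2 R p <= (1 / 2 ^+ n)%:E)%E).
Proof.
split; first by move=> Kp; exists bit_coloring; exact: bit_coloring_density0.
by move=> n _ Kp Fn; split; [exact: Rd2_ge | exact: Rd2_le].
Qed.
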